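(* Let $G$ be an infinite simple undirected graph with finite chromatic number $\chi(G)$. Then there is a minor $M$ of $G$ such that $M\not\cong G$ and $\chi(M)=\chi(G)$.
   Context: Graphs are simple and undirected: $G=(V,E)$ with $E \subseteq \{\{x,y\}: x,y\in V,\ x\neq y\}$. $\chi(G)$ denotes the chromatic number of $G$, i.e. the least cardinal $\lambda$ such that there is a graph homomorphism $G \to K_\lambda$; $K_\alpha$ is the complete graph on $\alpha$ vertices. Disjoint sets $S,T\subseteq V(G)$ are connected to each other if there are $s\in S$, $t\in T$ with $\{s,t\}\in E(G)$. For a collection $\mathcal D$ of pairwise disjoint, nonempty subsets of $V(G)$, each inducing a connected subgraph, let $G(\mathcal D)$ be the graph with vertex set $\mathcal D$ in which distinct $d,e\in\mathcal D$ are adjacent iff $d$ and $e$ are connected to each other. A graph $M$ is a minor of $G$ if there is such a collection $\mathcal D$ and an injective graph homomorphism $M \to G(\mathcal D)$. *)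

From Stdlib Require Import List Relations Arith.

Definition simple_graph {V : Type} (E : V -> V -> Prop) : Prop :=
  (forall x y, E x y -> E y x) /\ (forall x, ~ E x x).

Definition infinite_type (V : Type) : Prop :=
  ~ exists l : list V, forall v, In v l.

Definition colorable {V : Type} (E : V -> V -> Prop) (n : nat) : Prop :=
  exists c : V -> nat, (forall v, c v < n) /\ (forall x y, E x y -> c x <> c y).

Definition chromatic_number {V : Type} (E : V -> V -> Prop) (k : nat) : Prop :=
  colorable E k /\ (forall m, colorable E m -> k <= m).

Definition connected_set {V : Type} (E : V -> V -> Prop) (S : V -> Prop) : Prop :=
  forall x y, S x -> S y ->
    clos_refl_trans V (fun a b => S a /\ S b /\ E a b) x y.

Definition sets_connected {V : Type} (E : V -> V -> Prop) (S T : V -> Prop) : Prop :=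
  exists s t, S s /\ T t /\ E s t.

(* phi : W -> (V -> Prop) picks, for each vertex w of M, the element phi w of a
   collection D of pairwise disjoint, nonempty, connected vertex sets of G;
   w |-> phi w is then an injective homomorphism M -> G(D). *)
Definition minor_model {V W : Type} (E : V -> V -> Prop) (F : W -> W -> Prop)
    (phi : W -> V -> Prop) : Prop :=
  (forall w, exists v, phi w v) /\
  (forall w, connected_set E (phi w)) /\
  (forall w w' v, w <> w' -> phi w v -> phi w' v -> False) /\
  (forall w w', F w w' -> sets_connected E (phi w) (phi w')).

Definition is_minor {V W : Type} (E : V -> V -> Prop) (F : W -> W -> Prop) : Prop :=
  exists phi : W -> V -> Prop, minor_model E F phi.

Definition isomorphic {W V : Type} (F : W -> W -> Prop) (E : V -> V -> Prop) : Prop :=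
  exists (f : W -> V) (g : V -> W),
    (forall w, g (f w) = w) /\ (forall v, f (g v) = v) /\
    (forall x y, F x y <-> E (f x) (f y)).

From Stdlib Require Import List Relations Arith Lia.
From mathcomp Require Import ssreflect ssrbool boolp classical_sets filter.

(* By the de Bruijn-Erdos compactness theorem, a graph of chromatic number
   k = n + 1 has a finite set of vertices whose induced subgraph is not
   n-colourable.  That induced subgraph is a minor (each vertex is its own
   branch set), it is finite and hence not isomorphic to the infinite graph,
   and its chromatic number is exactly k, since a subgraph needs no more
   colours than the whole graph. *)

Definition colorable_on {V : Type} (E : V -> V -> Prop) (n : nat) (l : list V) :
    Prop :=
  exists c : V -> nat, (forall v, In v l -> lt (c v) n) /\
    (forall x y, In x l -> In y l -> E x y -> c x <> c y).

Definition induced {V : Type} (E : V -> V -> Prop) (P : V -> Prop) :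
    {v | P v} -> {v | P v} -> Prop :=
  fun x y => E (proj1_sig x) (proj1_sig y).

Lemma colorable_le {V : Type} {E : V -> V -> Prop} {m n : nat} :
  colorable E m -> le m n -> colorable E n.
Proof. by move=> [c [cm cE]] mn; exists c; split=> // v; have := cm v; lia. Qed.

Lemma not_colorable0 {V : Type} (E : V -> V -> Prop) :
  infinite_type V -> ~ colorable E 0.
Proof. by move=> infV [c [c0 _]]; apply: infV; exists nil => v; have := c0 v; lia. Qed.

Lemma ultra_finite_range (T : Type) (G : set_system T) (f : T -> nat) (n : nat) :
  UltraFilter G -> G (fun x => lt (f x) n) ->
  exists j, lt j n /\ G (fun x => f x = j).
Proof.
move=> GU; elim: n => [|n IH] Gn.
  by have [x] := filter_ex Gn; lia.
case: (in_ultra_setVsetC (fun x => f x = n) GU) => [Gfn|Gf_neq].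
  by exists n; split=> //; lia.
have [|j [jn Gj]] := IH.
  by apply: filterS (filterI Gn Gf_neq) => x [] /=; rewrite /setC /=; lia.
by exists j; split=> //; lia.
Qed.

(* An ultrafilter refining this filter of "eventually large" vertex lists
   glues the local colourings into a global one. *)
Definition supersets (V : Type) : set_system (list V) :=
  fun A => exists l, forall L, incl l L -> A L.

Lemma supersets_proper (V : Type) : ProperFilter (supersets V).
Proof.
apply: Build_ProperFilter_ex => [A [l Al]|]; first by exists l; apply: Al.
split.
- by exists nil.
- move=> A B [l1 Al1] [l2 Bl2]; exists (l1 ++ l2) => L sL.
  by split; [apply: Al1 | apply: Bl2] => x x_l; apply/sL/in_or_app; auto.
- by move=> A B AB [l Al]; exists l => L /Al /AB.
Qed.

Theorem de_bruijn_erdos {V : Type} (E : V -> V -> Prop) (n : nat) :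
  (forall l, colorable_on E n l) -> colorable E n.
Proof.
move=> loc; have [cl clP] := choice loc.
have [G [GU sub]] := ultraFilterLemma (supersets_proper V).
have in_ev v : G (fun L => In v L).
  by apply: sub; exists (v :: nil) => L; apply; left.
have colour v : exists j, lt j n /\ G (fun L => cl L v = j).
  by apply: ultra_finite_range; apply: filterS (in_ev v) => L /(proj1 (clP L)).
have [c cP] := choice colour.
exists c; split=> [v|x y Exy cxy]; first exact: (proj1 (cP v)).
have [L [[xL yL] [cxL cyL]]] := filter_ex
  (filterI (filterI (in_ev x) (in_ev y)) (filterI (proj2 (cP x)) (proj2 (cP y)))).
by apply: (proj2 (clP L) x y xL yL Exy); rewrite cxL cyL.
Qed.

Lemma finite_obstruction {V : Type} (E : V -> V -> Prop) (n : nat) :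
  ~ colorable E n -> exists l, ~ colorable_on E n l.
Proof.
move=> ncol; apply: contrapT => nex; apply/ncol/de_bruijn_erdos => l.
by apply: contrapT => nl; apply: nex; exists l.
Qed.

Lemma simple_graph_induced {V : Type} (E : V -> V -> Prop) (P : V -> Prop) :
  simple_graph E -> simple_graph (induced E P).
Proof. by move=> [Esym Eirr]; split=> [x y /Esym|x /Eirr]. Qed.

Lemma is_minor_induced {V : Type} (E : V -> V -> Prop) (P : V -> Prop) :
  is_minor E (induced E P).
Proof.
exists (fun w v => v = proj1_sig w); split; [|split; [|split]].
- by move=> w; exists (proj1_sig w).
- by move=> w x y -> ->; apply: rt_refl.
- move=> [w pw] [w' pw'] v ww' /= -> ew; apply: ww'; subst w'.
  by congr exist; apply: Prop_irrelevance.
- by move=> w w' Eww'; exists (proj1_sig w), (proj1_sig w').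
Qed.

Lemma colorable_induced {V : Type} (E : V -> V -> Prop) (P : V -> Prop) (n : nat) :
  colorable E n -> colorable (induced E P) n.
Proof. by move=> [c [cn cE]]; exists (fun w => c (proj1_sig w)); split=> [w|x y /cE]. Qed.

Lemma colorable_on_of_induced {V : Type} (E : V -> V -> Prop) (l : list V) (n : nat) :
  colorable (induced E (fun v => In v l)) n -> colorable_on E n l.
Proof.
move=> [c [cn cE]].
exists (fun v => if pselect (In v l) is left h then c (exist _ v h) else 0).
split=> [v vl|x y xl yl Exy].
  by case: pselect => [h|//]; apply: cn.
case: pselect => [hx|//]; case: pselect => [hy|//].
exact: (cE (exist _ x hx) (exist _ y hy)).
Qed.

Lemma finite_sig_of_list {V : Type} (P : V -> Prop) (l : list V) :
  (forall v, P v -> In v l) -> ~ infinite_type {v | P v}.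
Proof.
move=> Pl; apply.
exists (flat_map (fun v => if pselect (P v) is left h then exist P v h :: nil else nil) l).
move=> [v h]; apply/in_flat_map; exists v; split; first exact: Pl.
by case: pselect => [h'|//]; left; congr exist; apply: Prop_irrelevance.
Qed.

Lemma isomorphic_infinite {W V : Type} {F : W -> W -> Prop} {E : V -> V -> Prop} :
  isomorphic F E -> infinite_type V -> infinite_type W.
Proof.
move=> [f [g [_ [fg _]]]] infV [lw lwP]; apply: infV; exists (map f lw) => v.
by rewrite -(fg v); apply/in_map/lwP.
Qed.

Lemma chromatic_number_induced_obstruction {V : Type} (E : V -> V -> Prop)
    (n : nat) (l : list V) :
  chromatic_number E (S n) -> ~ colorable_on E n l ->
  chromatic_number (induced E (fun v => In v l)) (S n).
Proof.
move=> [colE _] nl; split; first exact: colorable_induced.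
move=> m colm; case: (le_lt_dec (S n) m) => // lt_m.
by case: nl; apply: colorable_on_of_induced; apply: (colorable_le colm); lia.
Qed.

Theorem mainTheorem5 :
  forall (V : Type) (E : V -> V -> Prop),
    simple_graph E -> infinite_type V ->
    forall k : nat, chromatic_number E k ->
    exists (W : Type) (F : W -> W -> Prop),
      simple_graph F /\ is_minor E F /\ ~ isomorphic F E /\ chromatic_number F k.
Proof.
move=> V E simpleE infV [|n] chiE.
  by case: (not_colorable0 E infV); case: chiE.
have [l nl] : exists l, ~ colorable_on E n l.
  by apply: finite_obstruction => colE; have := proj2 chiE n colE; lia.
exists {v | In v l}, (induced E (fun v => In v l)); split; [|split; [|split]].
- exact: simple_graph_induced.
- exact: is_minor_induced.
- move=> /isomorphic_infinite /(_ infV).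
  by apply: (finite_sig_of_list (fun v => In v l) l).
- exact: chromatic_number_induced_obstruction chiE nl.
Qed.
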